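(* Let $K$ be a field of characteristic zero, let $(p_\lambda(x_1,x_2,\ldots))_{\lambda\in\mathcal P}$ be a full sequence of symmetric functions over $K$, and let $F^{y}$ be a shift-invariant $K$-linear operator from symmetric functions in $x_1,x_2,\ldots$ to symmetric functions in $x_1,x_2,\ldots$ with coefficients polynomial in $y$, such that for every partition $\lambda$ $$F^{y}p_\lambda(x_1,x_2,\ldots)=\sum_{\alpha}p_\alpha(x_1,x_2,\ldots)\,p_{\lambda-\alpha}(y,0,0,\ldots),$$ the sum ranging over all integer vectors $\alpha$ with finite support. Then there is a nonzero constant $c\in K$ with $F^{y}=cE^{y}$; in other words, $(\frac1c p_\lambda)_{\lambda\in\mathcal P}$ is a full divided power sequence of symmetric functions.
   Context: A partition $\lambda$ is an eventually zero weakly decreasing sequence $\lambda_1\ge\lambda_2\ge\cdots$ of natural numbers; $\mathcal P$ is the set of partitions and $\mathcal P_n$ those with sum $|\lambda|=n$. The conjugate $\lambda'$ is given by $\lambda'_i=|\{j:\lambda_j\ge i\}|$. Reverse lexicographic order: $\alpha\ll\beta$ iff there is $i$ with $\alpha_i<\beta_i$ and $\alpha_j=\beta_j$ for all $j>i$. $m_\mu$ denotes the monomial symmetric function. A full sequence $(p_\lambda)_{\lambda\in\mathcal P}$ consists of symmetric functions with $p_\lambda$ homogeneous of degree $|\lambda|$ and $p_\lambda=\sum_{\mu\in\mathcal P_{|\lambda|},\ \mu=\lambda'\text{ or }\lambda'\ll\mu}b_{\lambda\mu}m_\mu$ with the coefficient $b_{\lambda\lambda'}$ of $m_{\lambda'}$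 nonzero. For an integer vector $\alpha$ with finite support: if all $\alpha_i\ge0$, $p_\alpha:=p_\lambda$ where $\lambda$ is the partition obtained by sorting $\alpha$; if some $\alpha_i<0$, $p_\alpha:=0$. The symmetric shift is $E^{a}q(x_1,x_2,\ldots)=q(a,x_1,x_2,\ldots)$ (for a scalar $a$ or an indeterminate $y$). An operator $\theta$ is shift-invariant if $E^a\theta=\theta E^a$ for all $a\in K$. A full divided power sequence is a full sequence satisfying $E^yp_\lambda(x_1,x_2,\ldots)=\sum_\alpha p_\alpha(x_1,x_2,\ldots)p_{\lambda-\alpha}(y,0,0,\ldots)$ for all $\lambda$. *)

(* Symmetric functions over a field K in x1,x2,... are
   represented by their coefficient function on monomials: f s is the
   coefficient of x1^(s_1) x2^(s_2) ... (trailing zeros of s allowed). *)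
From HB Require Import structures.
From mathcomp Require Import all_boot all_order all_algebra.
From Stdlib Require Import ClassicalEpsilon.
Set Implicit Arguments. Unset Strict Implicit. Unset Printing Implicit Defensive.
Import Order.TTheory GRing.Theory.
Local Open Scope ring_scope.

Definition is_part (l : seq nat) : bool := sorted geq l && all (fun i => 0 < i)%N l.

Definition shape (s : seq nat) : seq nat := sort geq [seq i <- s | (0 < i)%N].

Definition conj_part (l : seq nat) : seq nat :=
  [seq count (fun j => i <= j)%N l | i <- iota 1 (head 0%N l)].

Definition revlex (a b : seq nat) : Prop :=
  exists i, (nth 0 a i < nth 0 b i)%N /\
            forall j, (i < j)%N -> nth 0 a j = nth 0 b j.

Fixpoint vecs_le (l : seq nat) : seq (seq nat) :=
  match l with
  | [::] => [:: [::]]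
  | x :: l' => [seq i :: a | i <- iota 0 x.+1, a <- vecs_le l']
  end.

Definition vsub (l a : seq nat) : seq nat := [seq x.1 - x.2 | x <- zip l a]%N.

Section SymFun.
Variable K : fieldType.

Definition fsum (u : nat -> K) : K :=
  let N := epsilon (inhabits 0%N) (fun N => forall n, (N <= n)%N -> u n = 0) in
  \sum_(n < N) u n.

Definition is_sym (f : seq nat -> K) : Prop :=
  (forall s, f (rcons s 0%N) = f s) /\ (forall s t, perm_eq s t -> f s = f t).

Definition symfun (f : seq nat -> K) : Prop :=
  is_sym f /\ exists D, forall s, (D < sumn s)%N -> f s = 0.

(* symmetric functions in x with coefficients polynomial in y:
   g k s = coefficient of y^k x^s *)
Definition symfunY (g : nat -> seq nat -> K) : Prop :=
  (forall k, symfun (g k)) /\ exists N, forall k s, (N < k)%N -> g k s = 0.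

(* symmetric shift by an indeterminate y : q(y,x1,x2,...) *)
Definition Ey (f : seq nat -> K) : nat -> seq nat -> K := fun k s => f (k :: s).

(* symmetric shift by a scalar a : q(a,x1,x2,...) *)
Definition Ea (a : K) (f : seq nat -> K) : seq nat -> K :=
  fun s => fsum (fun j => a ^+ j * f (j :: s)).

Definition EaY (a : K) (g : nat -> seq nat -> K) : nat -> seq nat -> K :=
  fun k => Ea a (g k).

Definition full_seq (p : seq nat -> seq nat -> K) : Prop :=
  forall l, is_part l ->
    [/\ symfun (p l),
        (forall s, p l s != 0 -> sumn s = sumn l),
        (forall mu, is_part mu -> p l mu != 0 ->
            mu = conj_part l \/ revlex (conj_part l) mu)
      & p l (conj_part l) != 0].

(* right-hand side  sum_alpha p_alpha(x) p_{lambda-alpha}(y,0,0,...) :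
   coefficient of y^k x^s.  Terms with some alpha_i < 0 or
   some (lambda - alpha)_i < 0 vanish, so alpha ranges over vecs_le l. *)
Definition dp_rhs (p : seq nat -> seq nat -> K) (l : seq nat) : nat -> seq nat -> K :=
  fun k s => \sum_(a <- vecs_le l) p (shape a) s * p (shape (vsub l a)) [:: k].

Definition full_dps (p : seq nat -> seq nat -> K) : Prop :=
  full_seq p /\ forall l, is_part l -> forall k s, Ey (p l) k s = dp_rhs p l k s.

End SymFun.

(* Let c be the constant term of p_() (nonzero, as the leading coefficient of p_()).  At x = 0
   the only alpha contributing to the hypothesis is alpha = 0, because p_alpha is homogeneous of
   degree |alpha|; hence F p_l and c E^y p_l agree at x = 0.  The p_l are triangular for the
   reverse lexicographic order on the monomial basis, so they span the symmetric functions, and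
   F f = c E^y f at x = 0 for every f by linearity.  Shift invariance E^a F f = F E^a f is a
   polynomial identity in a, and since K is infinite its coefficient of a^j expresses the
   coefficient of x1^j x' in F f through coefficients of shorter monomials; induction on the
   number of variables gives F = c E^y.  Dividing the hypothesis by c^2 then shows that p/c is a
   full divided power sequence. *)

From Pilot Require Import Defs.
From HB Require Import structures.
From mathcomp Require Import all_boot all_order all_algebra.
From Stdlib Require Import Classical ClassicalEpsilon FunctionalExtensionality.
Import Order.TTheory GRing.Theory.
Set Implicit Arguments. Unset Strict Implicit. Unset Printing Implicit Defensive.

Lemma sorted_geq_cons x t : sorted geq (x :: t) -> all (geq x) t.
Proof. exact: order_path_min (rev_trans leq_trans). Qed.

Lemma sorted_geq_nth x t k : sorted geq (x :: t) -> nth 0 (x :: t) k <= x.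
Proof.
move=> /sorted_geq_cons /allP le_x; case: k => [|k] //=.
by case: (ltnP k (size t)) => [/(mem_nth 0)/le_x | /(nth_default 0)->].
Qed.

Lemma is_part_cons x t : is_part (x :: t) -> [/\ 0 < x, is_part t & all (geq x) t].
Proof.
case/andP=> sorted_xt /= /andP[x_gt0 t_pos]; split => //.
  by rewrite /is_part t_pos (path_sorted sorted_xt).
exact: sorted_geq_cons.
Qed.

Lemma ltn_count_geq_sorted mu i k : sorted geq mu ->
  (k < count (leq i) mu) = (k < size mu) && (i <= nth 0 mu k).
Proof.
elim: mu k => [|x t IH] k //= sorted_xt.
have sorted_t := path_sorted sorted_xt.
case: (leqP i x) => [le_ix | lt_xi]; first by case: k => [|k] //=; rewrite add1n ltnS IH.
have -> : count (leq i) t = 0.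
  apply/eqP; rewrite -leqn0 leqNgt -has_count; apply/hasPn => y yt.
  by rewrite -ltnNge (leq_ltn_trans (allP (sorted_geq_cons sorted_xt) y yt)).
case: k => [|k] /=; first by rewrite [i <= x]leqNgt lt_xi.
rewrite ltnS; case: (ltnP k (size t)) => //= lt_kt.
have le_x := allP (sorted_geq_cons sorted_xt) _ (mem_nth 0 lt_kt).
by rewrite [i <= _]leqNgt (leq_ltn_trans le_x).
Qed.

Lemma count_geq_iota1 m x : m <= x -> count (geq m) (iota 1 x) = m.
Proof.
move=> le_mx; rewrite -(subnKC le_mx) iotaD count_cat.
rewrite (@eq_in_count _ _ predT) ?count_predT ?size_iota; last first.
  by move=> i; rewrite mem_iota add1n ltnS => /andP[].
rewrite (@eq_in_count _ _ pred0) ?count_pred0 ?addn0 // => i.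
by rewrite mem_iota add1n => /andP[lt_mi _]; apply/negbTE; rewrite -ltnNge.
Qed.

Lemma is_part_conj mu : is_part mu -> is_part (conj_part mu).
Proof.
case: mu => [|x t] // _; apply/andP; split.
  apply: homo_sorted (iota_sorted _ _) => i j le_ij.
  by apply: sub_count => y; apply: leq_trans.
rewrite all_map; apply/allP => i; rewrite mem_iota add1n ltnS => /andP[_ le_ix] /=.
by rewrite le_ix.
Qed.

Lemma conj_partK mu : is_part mu -> conj_part (conj_part mu) = mu.
Proof.
case: mu => [|x t] // part_mu; have /andP[sorted_mu _] := part_mu.
have [x_gt0 /andP[_ t_pos] _] := is_part_cons part_mu.
have count_t : count (leq 1) t = size t by apply/eqP; rewrite -all_count.
have head_conj : head 0 (conj_part (x :: t)) = size (x :: t).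
  by rewrite /conj_part -(prednK x_gt0) /= add1n count_t.
have size_conj2 : size (conj_part (conj_part (x :: t))) = size (x :: t).
  by rewrite {1}/conj_part head_conj size_map size_iota.
apply: (@eq_from_nth _ 0) => // k; rewrite size_conj2 => lt_k.
rewrite {1}/conj_part head_conj (nth_map 0) ?size_iota // nth_iota // add1n count_map.
rewrite (@eq_count _ _ (geq (nth 0 (x :: t) k))) => [|i].
  by rewrite count_geq_iota1 // sorted_geq_nth.
by have := ltn_count_geq_sorted i k sorted_mu; rewrite lt_k /= => <-.
Qed.

Lemma is_part_shape s : is_part (Defs.shape s).
Proof. by rewrite /is_part sort_sorted ?all_sort ?filter_all //; apply: geq_total. Qed.

Lemma sumn_shape s : sumn (Defs.shape s) = sumn s.
Proof.
rewrite /Defs.shape (perm_sumn (permEl (perm_sort _ _))).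
by elim: s => //= -[|x] s IH //=; rewrite IH.
Qed.

Lemma shape_part l : is_part l -> Defs.shape l = l.
Proof.
case/andP=> sorted_l l_pos; rewrite /Defs.shape (all_filterP l_pos).
exact: sorted_sort (rev_trans leq_trans) _ sorted_l.
Qed.

Lemma shape_nseq0 n : Defs.shape (nseq n 0) = [::].
Proof. by apply/nilP; rewrite /nilp size_sort filter_nseq. Qed.

Lemma is_sym_shape (K : fieldType) (f : seq nat -> K) s :
  Defs.is_sym f -> f s = f (Defs.shape s).
Proof.
case=> f_rcons0 f_perm.
have f_cat0 n t : f (t ++ nseq n 0) = f t.
  by elim: n t => [|n IH] t; rewrite ?cats0 // -cat_rcons IH f_rcons0.
set zeros := [seq i <- s | ~~ (0 < i)].
have zerosE : nseq (size zeros) 0 = zeros.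
  by apply/esym/all_pred1P/allP => i; rewrite mem_filter -eqn0Ngt => /andP[].
rewrite -(f_cat0 (size zeros) (Defs.shape s)) zerosE; apply: f_perm.
rewrite perm_sym; apply: (@perm_trans _ ([seq i <- s | 0 < i] ++ zeros)).
  by rewrite perm_cat2r perm_sort.
exact: permEl (perm_filterC _ s).
Qed.

Lemma revlex_irr a : ~ revlex a a.
Proof. by case=> i [lt_ii _]; rewrite ltnn in lt_ii. Qed.

Lemma revlex_trans a b c : revlex a b -> revlex b c -> revlex a c.
Proof.
case=> i [lt_abi eq_ab] [j [lt_bcj eq_bc]].
case: (ltngtP i j) => [lt_ij | lt_ji | eq_ij].
- exists j; split; first by rewrite eq_ab.
  by move=> m lt_jm; rewrite eq_ab ?eq_bc // (ltn_trans lt_ij).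
- exists i; split; first by rewrite -eq_bc.
  by move=> m lt_im; rewrite eq_ab ?eq_bc // (ltn_trans lt_ji).
- exists i; split=> [|m lt_im]; first by rewrite (ltn_trans lt_abi) // eq_ij.
  by rewrite eq_ab ?eq_bc // -eq_ij.
Qed.

Lemma exists_revlex_minimal (T : seq (seq nat)) : T != [::] ->
  exists2 mu, mu \in T & forall nu, nu \in T -> ~ revlex nu mu.
Proof.
elim: T => [|x T IH] // _.
have [-> | /IH[m mT m_min]] := eqVneq T [::].
  by exists x => [|nu]; rewrite ?mem_seq1 // => /eqP->; apply: revlex_irr.
have [lt_xm | not_lt_xm] := classic (revlex x m).
  exists x; first exact: mem_head.
  move=> nu; rewrite inE => /predU1P[-> | nuT]; first exact: revlex_irr.
  by move=> /revlex_trans/(_ lt_xm); apply: m_min.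
exists m; first by rewrite inE mT orbT.
by move=> nu; rewrite inE => /predU1P[-> | /m_min].
Qed.

Definition revlex_upclosed (T : seq (seq nat)) : Prop :=
  forall mu nu, mu \in T -> is_part nu -> revlex mu nu -> sumn nu = sumn mu -> nu \in T.

Lemma revlex_upclosed_rem T mu : revlex_upclosed T ->
  (forall nu, nu \in T -> ~ revlex nu mu) -> revlex_upclosed [seq nu <- T | nu != mu].
Proof.
move=> T_up mu_min nu nu'; rewrite !mem_filter => /andP[_ nuT] part_nu' lt_nu_nu' eq_sumn.
rewrite (T_up nu) // andbT; apply/eqP => eq_nu'_mu.
by apply: (mu_min nu nuT); rewrite -eq_nu'_mu.
Qed.

Fixpoint bounded_seqs (n m : nat) : seq (seq nat) :=
  if n is n'.+1 then [::] :: [seq i :: t | i <- iota 0 m.+1, t <- bounded_seqs n' m]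
  else [:: [::]].

Lemma mem_bounded_seqs n m s : size s <= n -> all (geq m) s -> s \in bounded_seqs n m.
Proof.
elim: n s => [|n IH] [|x s] // size_s /andP[le_xm le_sm].
change (x :: s \in [::] :: [seq i :: t | i <- iota 0 m.+1, t <- bounded_seqs n m]).
rewrite in_cons; apply/orP; right.
apply: (allpairs_f (fun i t => i :: t)); first by rewrite mem_iota.
exact: IH.
Qed.

Lemma size_part_le_sumn mu : is_part mu -> size mu <= sumn mu.
Proof.
by case/andP=> _; elim: mu => //= x mu IH /andP[x_gt0 /IH]; rewrite -add1n; apply: leq_add.
Qed.

Lemma mem_leq_sumn s x : x \in s -> x <= sumn s.
Proof.
elim: s => //= y s IH; rewrite inE => /predU1P[-> | /IH le_xs]; first exact: leq_addr.
exact: leq_trans le_xs (leq_addl _ _).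
Qed.

Definition parts_le (D : nat) : seq (seq nat) :=
  [seq mu <- bounded_seqs D D | is_part mu && (sumn mu <= D)].

Lemma mem_parts_le D mu : (mu \in parts_le D) = is_part mu && (sumn mu <= D).
Proof.
rewrite mem_filter andb_idr // => /andP[part_mu le_muD].
apply: mem_bounded_seqs; first exact: leq_trans (size_part_le_sumn part_mu) le_muD.
by apply/allP => x /mem_leq_sumn le_x; apply: leq_trans le_x le_muD.
Qed.

Lemma revlex_upclosed_parts_le D : revlex_upclosed (parts_le D).
Proof. by move=> mu nu; rewrite !mem_parts_le => /andP[_ le_muD] -> _ ->. Qed.

Lemma vecs_le_sumn0 l : [seq a <- vecs_le l | sumn a == 0%N] = [:: nseq (size l) 0%N].
Proof.
elim: l => [|x l IH] //=; rewrite filter_cat filter_map.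
rewrite (@eq_filter _ _ (fun a => sumn a == 0%N)) // IH.
rewrite (_ : [seq a <- _ | _] = [::]) //; apply/nilP.
rewrite /nilp size_filter -leqn0 leqNgt -has_count; apply/hasPn => a.
case/allpairsP=> -[i b] [/=]; rewrite mem_iota => /andP[i_gt0 _] _ ->.
by rewrite -lt0n ltn_addr.
Qed.

Lemma vsub_nseq0 l : vsub l (nseq (size l) 0%N) = l.
Proof. by elim: l => //= x l IH; rewrite /vsub /= subn0; congr cons. Qed.

Local Open Scope ring_scope.

Section SymmetricFunctions.
Variable K : fieldType.
Implicit Types (f g : seq nat -> K) (u : nat -> K).

Lemma symfun0 : symfun (fun _ : seq nat => 0 : K).
Proof. by split; [split | exists 0%N]. Qed.

Lemma symfun_lin c f g : symfun f -> symfun g -> symfun (fun t => c * f t + g t).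
Proof.
move=> [[f_rcons0 f_perm] [Df f_deg]] [[g_rcons0 g_perm] [Dg g_deg]].
split; first split=> [s | s t st]; rewrite ?f_rcons0 ?g_rcons0 ?(f_perm s t) ?(g_perm s t) //.
exists (maxn Df Dg) => s; rewrite gtn_max => /andP[/f_deg-> /g_deg->].
by rewrite mulr0 addr0.
Qed.

Lemma symfun_scale c f : symfun f -> symfun (fun t => c * f t).
Proof.
move=> f_sym; have := symfun_lin c f_sym symfun0.
by congr symfun; apply: functional_extensionality => t; rewrite addr0.
Qed.

Lemma is_sym_eq0 f : Defs.is_sym f -> (forall mu, is_part mu -> f mu = 0) -> f = fun _ => 0.
Proof.
move=> f_sym f_parts; apply: functional_extensionality => s.
by rewrite (is_sym_shape s f_sym) f_parts ?is_part_shape.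
Qed.

Lemma symfun_cons_eq0 f : symfun f -> exists N, forall j s, (N <= j)%N -> f (j :: s) = 0.
Proof.
case=> _ [D f_deg]; exists D.+1 => j s le_Dj.
by rewrite f_deg //= (leq_trans le_Dj (leq_addr _ _)).
Qed.

Lemma fsumE u N : (forall n, (N <= n)%N -> u n = 0) -> fsum u = \sum_(n < N) u n.
Proof.
have sum_widen M M' : (forall n, (M <= n)%N -> u n = 0) -> (M <= M')%N ->
    \sum_(n < M) u n = \sum_(n < M') u n.
  move=> u_M le_MM'; rewrite -!(big_mkord xpredT) (big_cat_nat _ le_MM') //=.
  rewrite [X in _ + X]big1_seq ?addr0 // => n /andP[_].
  by rewrite mem_index_iota => /andP[/u_M].
move=> u_N; rewrite /fsum; set M := epsilon _ _.
have u_M : forall n, (M <= n)%N -> u n = 0.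
  exact: epsilon_spec _ (fun N => forall n, (N <= n)%N -> u n = 0) (ex_intro _ N u_N).
by rewrite (sum_widen _ _ u_M (leq_maxl M N)) (sum_widen _ _ u_N (leq_maxr M N)).
Qed.

Lemma Ea_sum a f N : (forall j s, (N <= j)%N -> f (j :: s) = 0) ->
  forall s, Ea a f s = \sum_(j < N) a ^+ j * f ((j : nat) :: s).
Proof. by move=> f_N s; apply: fsumE => j /f_N->; rewrite mulr0. Qed.

Lemma symfun_Ea a f : symfun f -> symfun (Ea a f).
Proof.
move=> f_sym; have [[f_rcons0 f_perm] [D f_deg]] := f_sym.
have [N f_N] := symfun_cons_eq0 f_sym.
split; first (split=> [s | s t st]; rewrite !(Ea_sum a f_N)).
- by apply: eq_bigr => j _; rewrite -rcons_cons f_rcons0.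
- by apply: eq_bigr => j _; congr (_ * _); apply: f_perm; rewrite perm_cons.
exists D => s lt_Ds; rewrite (Ea_sum a f_N) big1 // => j _.
by rewrite f_deg ?mulr0 //= (leq_trans lt_Ds (leq_addl _ _)).
Qed.

End SymmetricFunctions.

Lemma pchar0_natr_inj (K : fieldType) :
  [pchar K] =i pred0 -> injective (fun n : nat => n%:R : K).
Proof.
move=> /pcharf0P charK0 m n.
wlog le_mn : m n / (m <= n)%N => [wlog_mn | /eqP].
  by case: (leqP m n) => [/wlog_mn | /ltnW/wlog_mn eq_nm /esym/eq_nm].
by rewrite eq_sym -subr_eq0 -natrB // charK0 subn_eq0 => le_nm; apply/eqP; rewrite eqn_leq le_mn.
Qed.

Lemma pchar0_horner_eq0 (K : fieldType) (P : {poly K}) :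
  [pchar K] =i pred0 -> (forall a, P.[a] = 0) -> P = 0.
Proof.
move=> charK0 P_eq0; apply/eqP; apply: contraT => nz_P.
pose rs := [seq i%:R : K | i <- iota 0 (size P)].
have rs_roots : all (root P) rs by apply/allP => a _; apply/eqP.
have rs_uniq : uniq rs by rewrite (map_inj_uniq (pchar0_natr_inj charK0)) iota_uniq.
by have := max_poly_roots nz_P rs_roots rs_uniq; rewrite size_map size_iota ltnn.
Qed.

Section FullSequences.
Variables (K : fieldType) (p : seq nat -> seq nat -> K).
Hypothesis p_full : full_seq p.

Lemma full_seq_nil_neq0 : p [::] [::] != 0.
Proof. by have [] := @p_full [::] isT. Qed.

Lemma dp_rhs_nil l k : is_part l -> dp_rhs p l k [::] = p [::] [::] * p l [:: k].
Proof.
move=> part_l; rewrite /dp_rhs (bigID (fun a => sumn a == 0%N)) /=.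
rewrite [X in _ + X]big1 ?addr0 => [|a /negP sumn_a_neq0].
  by rewrite -big_filter vecs_le_sumn0 big_seq1 shape_nseq0 vsub_nseq0 shape_part.
have [_ p_hom _ _] := p_full (is_part_shape a).
have [-> | /p_hom] := eqVneq (p (Defs.shape a) [::]) 0; first by rewrite mul0r.
by rewrite sumn_shape => /esym/eqP.
Qed.

Lemma full_seq_scale c : c != 0 -> full_seq (fun l s => c * p l s).
Proof.
move=> c_neq0 l part_l; have [p_sym p_hom p_tri p_lead] := p_full part_l.
split=> [|s|mu part_mu|] /=; first exact: symfun_scale.
- by rewrite mulf_eq0 negb_or => /andP[_ /p_hom].
- by rewrite mulf_eq0 negb_or => /andP[_ /p_tri]; apply.
- by rewrite mulf_neq0.
Qed.

End FullSequences.

Lemma dp_rhs_scale (K : fieldType) (p : seq nat -> seq nat -> K) c l k s :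
  dp_rhs (fun l s => c * p l s) l k s = c ^+ 2 * dp_rhs p l k s.
Proof. by rewrite /dp_rhs mulr_sumr; apply: eq_bigr => a _; rewrite mulrACA expr2. Qed.

Section FullSeqSpan.
Variables (K : fieldType) (p : seq nat -> seq nat -> K) (P : (seq nat -> K) -> Prop).
Hypothesis p_full : full_seq p.
Hypothesis P_lin : forall c f g, symfun f -> symfun g -> P f -> P g -> P (fun t => c * f t + g t).
Hypothesis P_p : forall l, is_part l -> P (p l).

Lemma P_zero : P (fun _ => 0).
Proof.
have [p_sym _ _ _] := @p_full [::] isT.
have := P_lin (-1) p_sym p_sym (@P_p [::] isT) (@P_p [::] isT).
by congr P; apply: functional_extensionality => t; rewrite mulN1r addNr.
Qed.

Lemma span_supported n T f : (size T <= n)%N -> symfun f ->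
  (forall mu, is_part mu -> f mu != 0 -> mu \in T) -> revlex_upclosed T -> P f.
Proof.
elim: n T f => [|n IH] T f size_T f_sym f_supp T_up.
  suff -> : f = (fun _ => 0) by apply: P_zero.
  apply: (is_sym_eq0 (proj1 f_sym)) => mu part_mu.
  by apply/eqP/negPn/negP => /(f_supp _ part_mu); case: T size_T {f_supp T_up}.
have [T0 | T_neq0] := eqVneq T [::]; first by apply: (IH T) => //; rewrite T0.
have [mu muT mu_min] := exists_revlex_minimal T_neq0.
set T' := [seq nu <- T | nu != mu].
have size_T' : (size T' <= n)%N.
  rewrite -ltnS (leq_trans _ size_T) // size_filter -(count_predC (pred1 mu) T).
  by rewrite -add1n leq_add2r -has_count has_pred1.
have T'_up := revlex_upclosed_rem T_up mu_min.
have [/andP[part_mu f_mu] | f_nsupp_mu] := boolP (is_part mu && (f mu != 0)); last first.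
  apply: IH size_T' f_sym _ T'_up => nu part_nu f_nu; rewrite mem_filter f_supp // andbT.
  by apply: contraNneq f_nsupp_mu => <-; rewrite part_nu f_nu.
(* Subtracting the multiple of p_(mu') that kills the coefficient of the revlex-minimal mu
   leaves, by triangularity, a function supported in T minus mu. *)
set l := conj_part mu; have part_l : is_part l by apply: is_part_conj.
have [p_sym p_hom p_tri p_lead] := p_full part_l; rewrite conj_partK // in p_tri p_lead.
set r := f mu / p l mu; set g := fun t => - r * p l t + f t.
have g_sym : symfun g by apply: symfun_lin.
have -> : f = fun t => r * p l t + g t.
  by apply: functional_extensionality => t; rewrite /g addrA mulNr subrr add0r.
apply: P_lin (P_p part_l) (IH _ _ size_T' g_sym _ T'_up) => // nu part_nu.
rewrite mem_filter /g; have [-> | nu_neq_mu] /= := eqVneq nu mu.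
  by rewrite /r mulNr divfK // addNr eqxx.
have [f_nu0 | f_nu _] := eqVneq (f nu) 0; last exact: f_supp.
rewrite f_nu0 addr0 mulf_eq0 negb_or => /andP[_ p_nu].
have [nu_mu | lt_mu_nu] := p_tri nu part_nu p_nu; first by rewrite nu_mu eqxx in nu_neq_mu.
by apply: T_up muT part_nu lt_mu_nu _; rewrite (p_hom _ p_nu) (p_hom _ p_lead).
Qed.

Lemma full_seq_span f : symfun f -> P f.
Proof.
move=> f_sym; have [_ [D f_deg]] := f_sym.
have f_supp mu : is_part mu -> f mu != 0 -> mu \in parts_le D.
  by move=> part_mu f_mu; rewrite mem_parts_le part_mu leqNgt; apply: contra f_mu => /f_deg->.
exact: span_supported (leqnn _) f_sym f_supp (@revlex_upclosed_parts_le D).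
Qed.

End FullSeqSpan.

Section ShiftInvariance.
Variables (K : fieldType) (F : (seq nat -> K) -> nat -> seq nat -> K) (c : K).
Hypothesis charK0 : [pchar K] =i pred0.
Hypothesis F_symY : forall f, symfun f -> symfunY (F f).
Hypothesis F_shift : forall a f, symfun f -> forall k s, EaY a (F f) k s = F (Ea a f) k s.

Lemma F_cons s : (forall f, symfun f -> forall k, F f k s = c * f (k :: s)) ->
  forall f, symfun f -> forall k j, F f k (j :: s) = c * f (k :: j :: s).
Proof.
move=> F_s f f_sym k j; have [[_ f_perm] _] := f_sym.
have [N1 Ff_N1] := symfun_cons_eq0 ((F_symY f_sym).1 k).
have [N2 f_N2] := symfun_cons_eq0 f_sym.
set N := maxn N1 N2.
have Ff_N i t : (N <= i)%N -> F f k (i :: t) = 0.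
  by move=> le_Ni; apply: Ff_N1 (leq_trans (leq_maxl _ _) le_Ni).
have f_N i t : (N <= i)%N -> f (i :: t) = 0.
  by move=> le_Ni; apply: f_N2 (leq_trans (leq_maxr _ _) le_Ni).
pose u i := F f k (i :: s) - c * f (i :: k :: s).
have u_poly0 : \poly_(i < N) u i = 0.
  apply: (pchar0_horner_eq0 charK0) => a; rewrite horner_poly.
  have := F_shift a f_sym k s.
  rewrite /EaY (F_s _ (symfun_Ea a f_sym)) (Ea_sum a Ff_N) (Ea_sum a f_N) mulr_sumr.
  move=> /eqP; rewrite -subr_eq0 -sumrB => /eqP sum_eq0; rewrite -[RHS]sum_eq0.
  by apply: eq_bigr => i _; rewrite /u mulrBl mulrC -mulrA (mulrC (f _)).
have : u j = 0.
  have [lt_jN | le_Nj] := ltnP j N; last by rewrite /u Ff_N ?f_N ?mulr0 ?subr0.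
  by have := congr1 (fun P : {poly K} => P`_j) u_poly0; rewrite /= coef_poly lt_jN coef0.
move/eqP; rewrite subr_eq0 => /eqP->; congr (_ * _); apply: f_perm.
by rewrite (perm_catCA [:: j] [:: k] s).
Qed.

Lemma F_eq_Ey : (forall f, symfun f -> forall k, F f k [::] = c * f [:: k]) ->
  forall f, symfun f -> forall k s, F f k s = c * Ey f k s.
Proof.
move=> F_nil f f_sym k s; elim: s f f_sym k => [|j s IH] f f_sym k; first exact: F_nil.
exact: F_cons IH f f_sym k j.
Qed.

End ShiftInvariance.

Theorem theorem3 (K : fieldType) (charK0 : [pchar K] =i pred0)
  (p : seq nat -> seq nat -> K) (F : (seq nat -> K) -> nat -> seq nat -> K) :
  full_seq p ->
  (* F maps Lambda to Lambda[y] *)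
  (forall f, symfun f -> symfunY (F f)) ->
  (* F is K-linear *)
  (forall (c : K) f g, symfun f -> symfun g ->
     forall k s, F (fun t => c * f t + g t) k s = c * F f k s + F g k s) ->
  (* F is shift-invariant *)
  (forall (a : K) f, symfun f -> forall k s, EaY a (F f) k s = F (Ea a f) k s) ->
  (forall l, is_part l -> forall k s, F (p l) k s = dp_rhs p l k s) ->
  exists c : K, c != 0 /\
    (forall f, symfun f -> forall k s, F f k s = c * Ey f k s) /\
    full_dps (fun l s => c^-1 * p l s).
Proof.
move=> p_full F_symY F_lin F_shift F_p.
set c := p [::] [::]; have c_neq0 : c != 0 := full_seq_nil_neq0 p_full.
have F_nil : forall f, symfun f -> forall k, F f k [::] = c * f [:: k].
  apply: (full_seq_span (P := fun f => forall k, F f k [::] = c * f [:: k]) p_full).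
    by move=> a g h g_sym h_sym F_g F_h k; rewrite F_lin // F_g F_h mulrDr mulrCA.
  by move=> l part_l k; rewrite F_p // dp_rhs_nil.
have F_Ey := F_eq_Ey charK0 F_symY F_shift F_nil.
exists c; split=> //; split=> //; split; first by apply: full_seq_scale; rewrite ?invr_eq0.
move=> l part_l k s; have [p_sym _ _ _] := p_full _ part_l.
by rewrite dp_rhs_scale -F_p // F_Ey // expr2 -mulrA mulKf.
Qed.
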